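(* Let $d\in\mathbb Z$ and let $P:k((z))\to k((z))$ be a $k$-linear operator of the form $P(\sum_\beta c_\beta z^\beta)=\sum_\beta c_\beta\sum_{i\ge0}p_i(\beta)z^{\beta+d+i}$ with $p_0(\beta)=1$ for all $\beta$ and each $p_i(\beta)$ a polynomial in $\beta$. For integers $\alpha\ge0$ write $P^\alpha(\sum_\beta c_\beta z^\beta)=\sum_\beta c_\beta\sum_{i\ge0}p_i(\alpha,\beta)z^{\beta+\alpha d+i}$. Then for every $i$, $p_i(\alpha,\beta)$ is given by a polynomial in $\alpha$ and $\beta$.
   Context: $k$ is a field of characteristic zero. The coefficients $p_i(\alpha,\beta)$ are defined for integers $\alpha\ge0,\beta$ by the displayed expansion of the $\alpha$-th power of $P$ (so $p_i(1,\beta)=p_i(\beta)$, $p_0(0,\beta)=1$, $p_i(0,\beta)=0$ for $i>0$). *)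

From HB Require Import structures.
From mathcomp Require Import all_boot all_order all_algebra.
Set Implicit Arguments. Unset Strict Implicit. Unset Printing Implicit Defensive.
Import Order.TTheory GRing.Theory Num.Theory.
Local Open Scope ring_scope.

(* The operator P is encoded by d : int and the coefficient polynomials
   p : nat -> {poly k}:  P(z^b) = \sum_i (p i).[b] z^(b + d + i).
   palpha p d a b n is the coefficient p_n(a,b) of z^(b + a d + n) in P^a(z^b),
   computed by expanding P^(a+1)(z^b) = P(P^a(z^b)):
     P(P^a z^b) = \sum_i p_i(a,b) \sum_j p_j(b + a d + i) z^(b+(a+1)d+i+j). *)
Fixpoint palpha (k : fieldType) (p : nat -> {poly k}) (d : int)
    (a : nat) (b : int) (n : nat) : k :=
  match a with
  | 0%N => if n == 0%N then 1 else 0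
  | a'.+1 => \sum_(i < n.+1)
       palpha p d a' b i * (p (n - i)%N).[(b + (a'%:Z) * d + (i%:Z))%R%:~R]
  end.

(* Expanding P^(a+1) = P o P^a and using p_0 = 1 gives
     p_n(a+1, b) = p_n(a, b) + \sum_(i < n) p_i(a, b) p_(n-i)(b + a d + i),
   so for n > 0, by strong induction, p_n(a, b) is the partial sum over a' < a of a
   polynomial in (a', b).  In characteristic 0 such partial sums are again
   polynomial, since the power sums \sum_(a' < a) a'^m are: they are determined
   recursively by \sum_(i <= m) C(m+1, i) \sum_(a' < a) a'^i = a^(m+1). *)
From HB Require Import structures.
From mathcomp Require Import all_boot all_order all_algebra.
Import GRing.Theory.
Local Open Scope ring_scope.

Section Bipolynomial.
Context {k : fieldType}.
Implicit Types (f g : nat -> int -> k) (q : {poly k}).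

Definition bipolynomial f := exists Q : {poly {poly k}},
  forall (a : nat) (b : int), f a b = (Q.[(b%:~R : k)%:P]).[a%:R].

Lemma eq_bipolynomial {f g} : (forall a b, f a b = g a b) ->
  bipolynomial f -> bipolynomial g.
Proof. by move=> efg [Q HQ]; exists Q => a b; rewrite -efg. Qed.

Lemma bipolynomial_cst c : bipolynomial (fun _ _ => c).
Proof. by exists c%:P%:P => a b; rewrite !hornerC. Qed.

Lemma bipolynomial_a : bipolynomial (fun a _ => a%:R).
Proof. by exists 'X%:P => a b; rewrite hornerC hornerX. Qed.

Lemma bipolynomial_b : bipolynomial (fun _ b => b%:~R).
Proof. by exists 'X => a b; rewrite hornerX hornerC. Qed.

Lemma bipolynomialD {f g} : bipolynomial f -> bipolynomial g ->
  bipolynomial (fun a b => f a b + g a b).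
Proof. by move=> [P HP] [Q HQ]; exists (P + Q) => a b; rewrite !hornerD HP HQ. Qed.

Lemma bipolynomialM {f g} : bipolynomial f -> bipolynomial g ->
  bipolynomial (fun a b => f a b * g a b).
Proof. by move=> [P HP] [Q HQ]; exists (P * Q) => a b; rewrite !hornerM HP HQ. Qed.

Lemma bipolynomialZ c {f} : bipolynomial f -> bipolynomial (fun a b => c * f a b).
Proof. exact/bipolynomialM/bipolynomial_cst. Qed.

Lemma bipolynomial_sum {n} {F : 'I_n -> nat -> int -> k} :
  (forall j, bipolynomial (F j)) ->
  bipolynomial (fun a b => \sum_(j < n) F j a b).
Proof.
elim: n F => [|n IHn] F FP.
  by apply: (eq_bipolynomial _ (bipolynomial_cst 0)) => a b; rewrite big_ord0.
apply: (eq_bipolynomial _ (bipolynomialD (IHn _ (fun j => FP _)) (FP ord_max))).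
by move=> a b; rewrite big_ord_recr.
Qed.

Lemma bipolynomial_horner q {f} : bipolynomial f ->
  bipolynomial (fun a b => q.[f a b]).
Proof.
move=> fP; elim/poly_ind: q => [|q c IHq].
  by apply: (eq_bipolynomial _ (bipolynomial_cst 0)) => a b; rewrite horner0.
apply: (eq_bipolynomial _ (bipolynomialD (bipolynomialM IHq fP) (bipolynomial_cst c))).
by move=> a b; rewrite hornerMXaddC.
Qed.

Definition power_sum (m a : nat) : k := \sum_(j < a) j%:R ^+ m.

Lemma power_sum_binomial m a :
  \sum_(i < m.+1) power_sum i a *+ 'C(m.+1, i) = a%:R ^+ m.+1.
Proof.
elim: a => [|a IHa].
  by rewrite expr0n big1 // => i _; rewrite /power_sum big_ord0 mul0rn.
under eq_bigr => i _ do rewrite /power_sum big_ord_recr /= mulrnDl.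
rewrite big_split /= IHa -natr1 exprD1n [RHS]big_ord_recr /=.
by rewrite binn mulr1n addrC.
Qed.

Hypothesis char_k0 : [pchar k] =i pred0.

Lemma bipolynomial_power_sum m : bipolynomial (fun a _ => power_sum m a).
Proof.
elim/ltn_ind: m => -[_|m IHm].
  apply: (eq_bipolynomial _ bipolynomial_a) => a b.
  by rewrite /power_sum (eq_bigr _ (fun j _ => expr0 _)) sumr_const card_ord.
have m2_neq0 : m.+2%:R != 0 :> k by move/pcharf0P: char_k0 => ->.
have power_sumE a : power_sum m.+1 a = m.+2%:R^-1 *
    (a%:R ^+ m.+2 - \sum_(i < m.+1) power_sum i a *+ 'C(m.+2, i)).
  rewrite -(power_sum_binomial m.+1) big_ord_recr /= binSn addrAC subrr add0r.
  by rewrite -[power_sum m.+1 a *+ _]mulr_natl mulKf.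
apply: eq_bipolynomial (fun a b => esym (power_sumE a)) _.
apply/bipolynomialZ/bipolynomialD.
  apply: (eq_bipolynomial _ (bipolynomial_horner 'X^(m.+2) bipolynomial_a)) => a b.
  by rewrite hornerXn.
apply: (eq_bipolynomial _ (bipolynomialZ (-1) (bipolynomial_sum _))) => [a b|j].
  by rewrite mulN1r.
apply: (eq_bipolynomial _ (bipolynomialZ 'C(m.+2, j)%:R (IHm j (ltn_ord j)))) => a b.
by rewrite mulr_natl.
Qed.

Lemma bipolynomial_partial_sum {f} : bipolynomial f ->
  bipolynomial (fun a b => \sum_(a' < a) f a' b).
Proof.
move=> [Q HQ].
have sumE a b : \sum_(a' < a) f a' b = \sum_(j < size Q)
    (b%:~R : k) ^+ j * \sum_(i < size Q`_j) Q`_j`_i * power_sum i a.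
  under eq_bigr do rewrite HQ (horner_coef Q) horner_sum.
  rewrite exchange_big /=; apply: eq_bigr => j _.
  under eq_bigr do rewrite -rmorphXn mulrC hornerCM (horner_coef Q`_j).
  rewrite -mulr_sumr exchange_big /=; congr (_ * _); apply: eq_bigr => i _.
  by rewrite mulr_sumr.
apply: eq_bipolynomial (fun a b => esym (sumE a b)) _.
apply: bipolynomial_sum => j; apply: bipolynomialM.
  apply: (eq_bipolynomial _ (bipolynomial_horner 'X^j bipolynomial_b)) => a b.
  by rewrite hornerXn.
apply: bipolynomial_sum => i.
exact/bipolynomialZ/bipolynomial_power_sum.
Qed.

End Bipolynomial.

Section Palpha.
Context {k : fieldType} {p : nat -> {poly k}} (d : int).
Hypothesis p0_1 : p 0%N = 1.

Lemma palpha_coef0 a b : palpha p d a b 0 = 1.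
Proof.
elim: a => //= a IHa.
by rewrite big_ord_recr big_ord0 /= add0r IHa subnn p0_1 hornerC mulr1.
Qed.

Definition palpha_increment n a b : k := \sum_(i < n.+1)
  palpha p d a b i * (p (n.+1 - i)%N).[(b + a%:Z * d + i%:Z)%:~R].

Lemma palphaS a b n :
  palpha p d a.+1 b n.+1 = palpha p d a b n.+1 + palpha_increment n a b.
Proof. by rewrite /= big_ord_recr /= subnn p0_1 hornerC mulr1 addrC. Qed.

Lemma palpha_telescope a b n :
  palpha p d a b n.+1 = \sum_(a' < a) palpha_increment n a' b.
Proof. by elim: a => [|a IHa]; rewrite ?big_ord0 // big_ord_recr palphaS IHa. Qed.

End Palpha.

Theorem lemma7p1 (k : fieldType) (hchar : [pchar k] =i pred0)
    (d : int) (p : nat -> {poly k}) (hp0 : p 0%N = 1) (i : nat) :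
  exists Q : {poly {poly k}},
    forall (alpha : nat) (beta : int),
      palpha p d alpha beta i = (Q.[(beta%:~R : k)%:P]).[alpha%:R].
Proof.
suff : bipolynomial (fun a b => palpha p d a b i) by [].
elim/ltn_ind: i => -[_|n IHn].
  by apply: (eq_bipolynomial _ (bipolynomial_cst 1)) => a b; rewrite palpha_coef0.
apply: eq_bipolynomial (fun a b => esym (palpha_telescope d hp0 a b n)) _.
apply: (bipolynomial_partial_sum hchar); rewrite /palpha_increment.
apply: bipolynomial_sum => j; apply: bipolynomialM; first exact: IHn.
apply: bipolynomial_horner.
have shiftE a b : ((b + a%:Z * d + j%:Z)%:~R : k) = b%:~R + a%:R * d%:~R + j%:R.
  by rewrite !intrD intrM.
apply: eq_bipolynomial (fun a b => esym (shiftE a b)) _.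
exact: bipolynomialD (bipolynomialD bipolynomial_b
  (bipolynomialM bipolynomial_a (bipolynomial_cst _))) (bipolynomial_cst _).
Qed.
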